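(* Let $c\ge1$ be an integer and $\lambda,\mu,\alpha>0$ with $\lambda<c\mu$. Consider the $(c+1)\times(c+1)$ matrices (rows and columns indexed $0,\dots,c$) $Q_1=\lambda I$, $Q_{-1}=\mathrm{diag}(0,\mu,2\mu,\dots,c\mu)$, and $Q_0$ upper bidiagonal with diagonal entries $(Q_0)_{j,j}=-q_j$, $q_j=\lambda+(c-j)\alpha+j\mu$, superdiagonal entries $(Q_0)_{j,j+1}=(c-j)\alpha$ ($j=0,\dots,c-1$), and all other entries $0$. Let $R=(r_{i,j})$ be the minimal nonnegative solution of $Q_1+RQ_0+R^2Q_{-1}=O$. Then $R$ is upper triangular, its diagonal entries are $$r_{0,0}=\frac{\lambda}{\lambda+c\alpha},\quad r_{c,c}=\frac{\lambda}{c\mu},\quad r_{i,i}=\frac{\lambda+i\mu+(c-i)\alpha-\sqrt{(\lambda+i\mu+(c-i)\alpha)^2-4i\lambda\mu}}{2i\mu}\ (1\le i\le c-1),$$ and for $0\le i<j\le c$, $$r_{i,j}=\frac{(c-j+1)\alpha\, r_{i,j-1}+j\mu\sum_{k=i+1}^{j-1}r_{i,k}r_{k,j}}{\lambda+(c-j)\alpha+j\mu-j\mu(r_{i,i}+r_{j,j})}.$$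
   Context: $Q_{1},Q_0,Q_{-1}$ are the level-up, local and level-down blocks of the homogeneous part (levels $\ge c$, level = number of jobs, phase = number of busy servers) of the QBD generator of the M/M/$c$ queue with exponential setup times under the ON-OFF policy; $R$ is the rate matrix of that homogeneous part. *)

From HB Require Import structures.
From mathcomp Require Import all_boot all_order all_algebra.
Set Implicit Arguments. Unset Strict Implicit. Unset Printing Implicit Defensive.
Import Order.TTheory GRing.Theory Num.Theory.
Local Open Scope ring_scope.

(* Homogeneous QBD blocks of the M/M/c queue with exponential setup (ON-OFF),
   phases 0..c = number of busy servers. *)

Definition Qup (R : ringType) (c : nat) (lam : R) : 'M[R]_(c.+1) :=
  \matrix_(i, j) (if i == j then lam else 0).

Definition Qdown (R : ringType) (c : nat) (mu : R) : 'M[R]_(c.+1) :=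
  \matrix_(i, j) (if i == j then (i : nat)%:R * mu else 0).

Definition Qloc (R : ringType) (c : nat) (lam mu alpha : R) : 'M[R]_(c.+1) :=
  \matrix_(i, j)
    (if i == j then - (lam + (c - i)%:R * alpha + (i : nat)%:R * mu)
     else if (j : nat) == i.+1 then (c - i)%:R * alpha else 0).

Definition solves_QBD (R : ringType) (c : nat) (lam mu alpha : R)
    (X : 'M[R]_(c.+1)) : Prop :=
  Qup c lam + X *m Qloc c lam mu alpha + (X *m X) *m Qdown c mu = 0.

Definition nonneg_mx (R : numDomainType) (m n : nat) (X : 'M[R]_(m, n)) : Prop :=
  forall i j, 0 <= X i j.

Definition minimal_nonneg_solution (R : numDomainType) (c : nat)
    (lam mu alpha : R) (X : 'M[R]_(c.+1)) : Prop :=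
  [/\ solves_QBD lam mu alpha X, nonneg_mx X &
      forall Y : 'M[R]_(c.+1), solves_QBD lam mu alpha Y -> nonneg_mx Y ->
        forall i j, X i j <= Y i j].

From HB Require Import structures.
From mathcomp Require Import all_boot all_order all_algebra.
From mathcomp Require Import ring lra zify.
Import Order.TTheory GRing.Theory Num.Theory.
Set Implicit Arguments. Unset Strict Implicit. Unset Printing Implicit Defensive.
Local Open Scope ring_scope.

(* Solve [Q_1 + R Q_0 + R^2 Q_{-1} = O] entrywise for an upper triangular
   [R]: entry [(j, j)] is a quadratic [lam - q_j x + j mu x^2 = 0], whose smaller
   root is taken, and entry [(i, j)], [i < j], is linear in [r_{i,j}] with
   coefficient [q_j - j mu (r_{i,i} + r_{j,j})] and right-hand side built from
   entries closer to the diagonal.  The diagonal roots lie in [[0, 1)] and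
   satisfy [j mu r_{j,j} <= lam], which makes that coefficient positive, so the
   recursion produces a nonnegative solution.  The minimal nonnegative solution
   lies below it, hence is upper triangular; its diagonal entries are roots of
   the same quadratics below the smaller roots, hence equal them, and its
   off-diagonal entries are then forced by the linear equations. *)

Definition upper_triangular (R : nzRingType) (n : nat) (X : 'M[R]_n) : Prop :=
  forall i j : 'I_n, (j < i)%N -> X i j = 0.

Section UpperTriangularSquare.
Variables (R : nzRingType) (n : nat) (X : 'M[R]_n).
Hypothesis Xu : upper_triangular X.

Lemma upper_mul_outside (i k j : 'I_n) :
  ~~ (i <= k <= j)%N -> X i k * X k j = 0.
Proof.
rewrite negb_and -!ltnNge => /orP[lt_ki|lt_jk]; first by rewrite Xu ?mul0r.
by rewrite (Xu lt_jk) mulr0.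
Qed.

Lemma mulmx_upper_lt (i j : 'I_n) : (i < j)%N ->
  (X *m X) i j = X i i * X i j + X i j * X j j
                 + \sum_(k < n | (i < k < j)%N) X i k * X k j.
Proof.
move=> lt_ij; rewrite mxE (bigID (fun k : 'I_n => (i < k < j)%N)) /= addrC.
congr (_ + _); rewrite (bigD1 i) ?ltnn //= (bigD1 j) /=; last first.
  by rewrite ltnn andbF -(inj_eq val_inj) /= neq_ltn lt_ij orbT.
rewrite big1 ?addr0 // => k /andP[/andP[/negP k_out k_neq_i] k_neq_j].
apply: upper_mul_outside.
by move: k_out k_neq_i k_neq_j; rewrite -!(inj_eq val_inj) /=; lia.
Qed.

Lemma mulmx_upper_diag (i : 'I_n) : (X *m X) i i = X i i ^+ 2.
Proof.
rewrite mxE (bigD1 i) //= big1 ?addr0 ?expr2 // => k k_neq_i.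
by apply: upper_mul_outside; move: k_neq_i; rewrite -(inj_eq val_inj) /=; lia.
Qed.

Lemma mulmx_upper_gt (i j : 'I_n) : (j < i)%N -> (X *m X) i j = 0.
Proof. by move=> lt_ji; rewrite mxE big1 // => k _; apply: upper_mul_outside; lia. Qed.

End UpperTriangularSquare.

Section QBDResidual.
Variables (R : comNzRingType) (c : nat) (lam mu alpha : R).

Definition qrate (j : nat) : R := lam + (c - j)%:R * alpha + j%:R * mu.

Definition qbd_residual (X : 'M[R]_c.+1) : 'M[R]_c.+1 :=
  Qup c lam + X *m Qloc c lam mu alpha + (X *m X) *m Qdown c mu.

Lemma qbd_residualE (X : 'M[R]_c.+1) (i j : 'I_c.+1) :
  qbd_residual X i j =
  (if i == j then lam else 0) - X i j * qrate j
  + (if (0 < j)%N then (c - j + 1)%:R * alpha * X i (inord j.-1) else 0)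
  + j%:R * mu * (X *m X) i j.
Proof.
have lt_jc := ltn_ord j.
have down : \sum_k (X *m X) i k * Qdown c mu k j = (X *m X) i j * (j%:R * mu).
  rewrite (bigD1 j) //= big1 ?addr0 => [|k /negbTE k_neq_j].
    by rewrite [Qdown _ _ _ _]mxE eqxx.
  by rewrite [Qdown _ _ _ _]mxE k_neq_j mulr0.
have loc : \sum_k X i k * Qloc c lam mu alpha k j = - (X i j * qrate j)
   + (if (0 < j)%N then (c - j + 1)%:R * alpha * X i (inord j.-1) else 0).
  rewrite (bigD1 j) //= mxE eqxx mulrN; congr (_ + _).
  have [j0|j_gt0] := posnP j.
    by apply: big1 => k /negbTE k_neq_j; rewrite mxE k_neq_j j0 mulr0.
  have pred_neq : (inord j.-1 != j :> 'I_c.+1).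
    by rewrite -(inj_eq val_inj) /= inordK; lia.
  rewrite (bigD1 (inord j.-1)) //= big1 ?addr0 => [|k /andP[k_neq_j k_neq_pred]].
    rewrite mxE inordK ?(negbTE pred_neq); last lia.
    by rewrite prednK // eqxx mulrC; have -> : (c - j.-1 = c - j + 1)%N by lia.
  rewrite mxE (negbTE k_neq_j); case: eqP => [jE|]; last by rewrite mulr0.
  by move: k_neq_pred; rewrite -(inj_eq val_inj) /= inordK; lia.
rewrite /qbd_residual 2!mxE [Qup _ _ _ _]mxE [(X *m Qloc _ _ _ _) i j]mxE loc.
by rewrite [(X *m X *m _) i j]mxE down addrA [_ * (_ * mu)]mulrC.
Qed.

Section UpperSolution.
Variable X : 'M[R]_c.+1.
Hypothesis Xu : upper_triangular X.

Lemma qbd_residual_lt (i j : 'I_c.+1) : (i < j)%N ->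
  qbd_residual X i j =
  (c - j + 1)%:R * alpha * X i (inord j.-1)
  + j%:R * mu * \sum_(k < c.+1 | (i < k < j)%N) X i k * X k j
  - X i j * (qrate j - j%:R * mu * (X i i + X j j)).
Proof.
move=> lt_ij; rewrite qbd_residualE mulmx_upper_lt //.
have -> : (i == j) = false by rewrite -(inj_eq val_inj) /= ltn_eqF.
rewrite (leq_ltn_trans _ lt_ij) //; ring.
Qed.

Lemma qbd_residual_diag (j : 'I_c.+1) :
  qbd_residual X j j = lam - qrate j * X j j + j%:R * mu * X j j ^+ 2.
Proof.
rewrite qbd_residualE mulmx_upper_diag // eqxx.
case: posnP => [_|j_gt0]; first by rewrite addr0 mulrC.
rewrite (@Xu j (inord j.-1)) ?mulr0 ?addr0 1?mulrC // inordK; have := ltn_ord j; lia.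
Qed.

Lemma qbd_residual_gt (i j : 'I_c.+1) : (j < i)%N -> qbd_residual X i j = 0.
Proof.
move=> lt_ji; rewrite qbd_residualE mulmx_upper_gt // (Xu lt_ji) mul0r.
have -> : (i == j) = false by rewrite -(inj_eq val_inj) /= gtn_eqF.
rewrite mulr0 subrr addr0; case: posnP => [_|j_gt0]; first by rewrite addr0.
rewrite (@Xu i (inord j.-1)) ?mulr0 ?addr0 // inordK; have := ltn_ord j; lia.
Qed.

End UpperSolution.
End QBDResidual.

Section SmallRoot.
Variable R : rcfType.

Definition small_root (a q l : R) : R :=
  (q - Num.sqrt (q ^+ 2 - 4%:R * a * l)) / (2%:R * a).

Section Discriminant.
Variables a q l : R.
Hypotheses (a_gt0 : 0 < a) (disc_ge0 : 4%:R * a * l <= q ^+ 2).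
Let s := Num.sqrt (q ^+ 2 - 4%:R * a * l).

Let s_ge0 : 0 <= s. Proof. exact: sqrtr_ge0. Qed.
Let sqr_s : s ^+ 2 = q ^+ 2 - 4%:R * a * l.
Proof. by rewrite sqr_sqrtr // subr_ge0. Qed.
Let twice_small_root : 2%:R * a * small_root a q l = q - s.
Proof. by rewrite /small_root mulrC divfK // mulf_neq0 ?pnatr_eq0 ?gt_eqF. Qed.

Lemma small_root_root :
  l - q * small_root a q l + a * small_root a q l ^+ 2 = 0.
Proof.
apply: (mulfI (_ : 4%:R * a != 0)); first by rewrite mulf_neq0 ?pnatr_eq0 ?gt_eqF.
have -> : 4%:R * a * (l - q * small_root a q l + a * small_root a q l ^+ 2) =
  (2%:R * a * small_root a q l) ^+ 2 - 2%:R * q * (2%:R * a * small_root a q l)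
  + 4%:R * a * l by ring.
rewrite twice_small_root mulr0.
by transitivity (s ^+ 2 - (q ^+ 2 - 4%:R * a * l)); [ring | rewrite sqr_s subrr].
Qed.

(* Every root is [(q - s) / (2 a)] or [(q + s) / (2 a)]. *)
Lemma small_root_le_root x : l - q * x + a * x ^+ 2 = 0 -> small_root a q l <= x.
Proof.
move=> root_x.
have sq : (2%:R * a * x - q) ^+ 2 = s ^+ 2.
  transitivity (s ^+ 2 + 4%:R * a * (l - q * x + a * x ^+ 2)).
    by rewrite sqr_s; ring.
  by rewrite root_x mulr0 addr0.
have /eqP : (2%:R * a * x - q - s) * (2%:R * a * x - q + s) = 0.
  by rewrite -subr_sqr sq subrr.
rewrite -(ler_pM2l (_ : 0 < 2%:R * a)) ?twice_small_root; last by rewrite mulr_gt0.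
by have := s_ge0; rewrite mulf_eq0 => s0 /orP[]/eqP; lra.
Qed.

End Discriminant.

Section PositiveCoefficients.
Variables a b l : R.
Hypotheses (a_gt0 : 0 < a) (b_ge0 : 0 <= b) (l_ge0 : 0 <= l).
Let q := l + a + b.
Let s : R := Num.sqrt (q ^+ 2 - 4%:R * a * l).

Lemma small_root_disc : 4%:R * a * l <= q ^+ 2.
Proof.
rewrite -subr_ge0.
have -> : q ^+ 2 - 4%:R * a * l = (l - a) ^+ 2 + b * (b + 2%:R * (l + a)).
  by rewrite /q; ring.
by rewrite addr_ge0 ?sqr_ge0 // mulr_ge0 // addr_ge0 // mulr_ge0 // addr_ge0 // ltW.
Qed.

Let le_sqrt_disc x : x ^+ 2 <= q ^+ 2 - 4%:R * a * l -> x <= s.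
Proof. by move=> le; apply: le_trans (ler_norm x) _; rewrite -sqrtr_sqr ler_wsqrtr. Qed.

Let two_a_gt0 : 0 < 2%:R * a. Proof. by rewrite mulr_gt0. Qed.

Lemma small_root_ge0 : 0 <= small_root a q l.
Proof.
rewrite /small_root; apply: divr_ge0; last exact: ltW.
rewrite subr_ge0; have q_ge0 : 0 <= q by rewrite !addr_ge0 // ltW.
rewrite -[leRHS](ger0_norm q_ge0) -sqrtr_sqr ler_wsqrtr // lerBlDr lerDl.
by rewrite !mulr_ge0 // ltW.
Qed.

Lemma small_root_mul_le : a * small_root a q l <= l.
Proof.
rewrite /small_root mulrA ler_pdivrMr //.
have -> : l * (2%:R * a) = a * (2%:R * l) by ring.
rewrite ler_pM2l // lerBlDr -lerBlDl.
apply: le_sqrt_disc; rewrite -subr_ge0.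
have -> : q ^+ 2 - 4%:R * a * l - (q - 2%:R * l) ^+ 2 = 4%:R * l * b by rewrite /q; ring.
by rewrite !mulr_ge0.
Qed.

Lemma small_root_lt1 : 0 < b -> small_root a q l < 1.
Proof.
move=> b_gt0; rewrite /small_root ltr_pdivrMr // mul1r ltrBlDr -ltrBlDl.
have lt_disc : (q - 2%:R * a) ^+ 2 < q ^+ 2 - 4%:R * a * l.
  rewrite -subr_gt0.
  have -> : q ^+ 2 - 4%:R * a * l - (q - 2%:R * a) ^+ 2 = 4%:R * a * b.
    by rewrite /q; ring.
  by rewrite !mulr_gt0.
apply: le_lt_trans (ler_norm _) _.
by rewrite -sqrtr_sqr ltr_sqrt // (le_lt_trans (sqr_ge0 _) lt_disc).
Qed.

End PositiveCoefficients.
End SmallRoot.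

Section ExplicitSolution.
Variables (R : rcfType) (c : nat) (lam mu alpha : R).
Hypotheses (c_ge1 : (1 <= c)%N) (lam_gt0 : 0 < lam) (mu_gt0 : 0 < mu)
  (alpha_gt0 : 0 < alpha) (lam_lt : lam < c%:R * mu).
Local Notation q := (qrate c lam mu alpha).

(* For [j = 0] the diagonal equation degenerates to [lam - q_0 x = 0]. *)
Definition rdiag (j : nat) : R :=
  if j is 0 then lam / q 0
  else small_root (j%:R * mu) (lam + j%:R * mu + (c - j)%:R * alpha) lam.

Lemma qrateE j : q j = lam + j%:R * mu + (c - j)%:R * alpha.
Proof. by rewrite /qrate addrAC. Qed.

Lemma qrate_gt0 j : 0 < q j.
Proof.
apply: lt_le_trans lam_gt0 _; rewrite /qrate -addrA lerDl.
by rewrite addr_ge0 // mulr_ge0 ?ler0n ?ltW.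
Qed.

Let small_root_hyps j : [/\ 0 < j.+1%:R * mu, 0 <= (c - j.+1)%:R * alpha & 0 <= lam].
Proof. by split; rewrite ?mulr_gt0 ?mulr_ge0 ?ler0n ?ltW. Qed.

Lemma rdiag0 : rdiag 0 = lam / (lam + c%:R * alpha).
Proof. by rewrite /rdiag /qrate mul0r addr0 subn0. Qed.

Lemma rdiag_root j : lam - q j * rdiag j + j%:R * mu * rdiag j ^+ 2 = 0.
Proof.
case: j => [|j]; first by rewrite mul0r mul0r addr0 mulrC divfK ?subrr ?gt_eqF ?qrate_gt0.
have [a_gt0 b_ge0 l_ge0] := small_root_hyps j.
by rewrite qrateE small_root_root ?small_root_disc.
Qed.

Lemma rdiag_le_root j x : lam - q j * x + j%:R * mu * x ^+ 2 = 0 -> rdiag j <= x.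
Proof.
case: j => [|j] root_x.
  rewrite /rdiag ler_pdivrMr ?qrate_gt0 // mulrC.
  by move/eqP: root_x; rewrite mul0r mul0r addr0 subr_eq0 => /eqP <-.
have [a_gt0 b_ge0 l_ge0] := small_root_hyps j.
by apply: small_root_le_root; rewrite ?small_root_disc // -qrateE.
Qed.

Lemma rdiag_ge0 j : 0 <= rdiag j.
Proof.
case: j => [|j]; first by rewrite divr_ge0 ?ltW ?qrate_gt0.
by have [] := small_root_hyps j; exact: small_root_ge0.
Qed.

Lemma rdiag_mul_le j : j%:R * mu * rdiag j <= lam.
Proof.
case: j => [|j]; first by rewrite !mul0r ltW.
by have [] := small_root_hyps j; exact: small_root_mul_le.
Qed.

Lemma rdiag_lt1 j : (j <= c)%N -> rdiag j < 1.
Proof.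
case: j => [_|j le_jc].
  have calpha_gt0 : 0 < c%:R * alpha by rewrite mulr_gt0 // ltr0n.
  by rewrite rdiag0 ltr_pdivrMr ?mul1r ?ltrDl // addr_gt0.
have [a_gt0 b_ge0 l_ge0] := small_root_hyps j.
have [lt_jc|eq_jc] := ltnP j.+1 c.
  by apply: small_root_lt1 => //; rewrite mulr_gt0 // ltr0n subn_gt0.
have jE : j.+1 = c by apply/eqP; rewrite eqn_leq le_jc.
rewrite -(ltr_pM2l a_gt0) mulr1; apply: le_lt_trans (rdiag_mul_le _) _.
by rewrite jE.
Qed.

Lemma rdiag_c : rdiag c = lam / (c%:R * mu).
Proof.
have cmu_gt0 : 0 < c%:R * mu by rewrite mulr_gt0 // ltr0n.
have : (c%:R * mu * rdiag c - lam) * (rdiag c - 1) = 0.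
  rewrite -[RHS](rdiag_root c) qrateE subnn mul0r addr0; ring.
move/eqP; rewrite mulf_eq0 !subr_eq0 (lt_eqF (rdiag_lt1 (leqnn c))) orbF => /eqP.
by move=> <-; rewrite mulrC mulrA mulVf ?mul1r ?gt_eqF.
Qed.

Lemma offdiag_denom_gt0 i j : (i < j)%N -> (j <= c)%N ->
  0 < q j - j%:R * mu * (rdiag i + rdiag j).
Proof.
move=> lt_ij le_jc.
have jmu_gt0 : 0 < j%:R * mu by rewrite mulr_gt0 // ltr0n (leq_ltn_trans _ lt_ij).
have lt_i : j%:R * mu * rdiag i < j%:R * mu.
  by rewrite -[ltRHS]mulr1 ltr_pM2l // rdiag_lt1 // ltnW // (leq_trans lt_ij).
have le_j := rdiag_mul_le j.
have setup_ge0 : 0 <= (c - j)%:R * alpha by rewrite mulr_ge0 ?ler0n ?ltW.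
rewrite qrateE; lra.
Qed.

(* [rband d i j] is the entry [(i, j)] of the solution as soon as [j - i <= d]:
   the fuel [d] is the number of superdiagonals computed so far. *)
Fixpoint rband (d i j : nat) : R :=
  if d is d'.+1 then
    if (i < j)%N && (j - i == d)%N then
      ((c - j + 1)%:R * alpha * rband d' i j.-1
       + j%:R * mu * \sum_(k < c.+1 | (i < k < j)%N) rband d' i k * rband d' k j)
      / (q j - j%:R * mu * (rband d' i i + rband d' j j))
    else rband d' i j
  else if i == j then rdiag j else 0.

Lemma rband_lower d i j : (j < i)%N -> rband d i j = 0.
Proof.
move=> lt_ji; elim: d => [|d IHd] /=; first by rewrite gtn_eqF.
by rewrite ltnNge (ltnW lt_ji).
Qed.

Lemma rband_diag d i : rband d i i = rdiag i.
Proof. by elim: d => [|d IHd] /=; rewrite ?eqxx ?ltnn. Qed.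

Lemma rband_stable d e i j : (j - i <= d)%N -> (d <= e)%N -> rband e i j = rband d i j.
Proof.
move=> le_d /subnK <-; elim: (e - d)%N => [|n IHn] //=.
have -> : (j - i == (n + d).+1)%N = false by apply/negbTE; lia.
by rewrite andbF.
Qed.

Lemma rband_ge0 d i j : (j <= c)%N -> 0 <= rband d i j.
Proof.
elim: d i j => [|d IHd] i j le_jc /=; first by case: eqP => // _; exact: rdiag_ge0.
case: ifP => [/andP[lt_ij _]|_]; last exact: IHd.
apply: divr_ge0; last by rewrite !rband_diag ltW // offdiag_denom_gt0.
apply: addr_ge0; apply: mulr_ge0.
- by rewrite mulr_ge0 ?ler0n ?ltW.
- exact/IHd/(leq_trans (leq_pred _) le_jc).
- by rewrite mulr_ge0 ?ler0n ?ltW.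
- apply: sumr_ge0 => k /andP[_ lt_kj].
  by rewrite mulr_ge0 ?IHd // -ltnS ltn_ord.
Qed.

Definition Rsol : 'M[R]_c.+1 := \matrix_(i, j) rband c i j.

Lemma Rsol_band d (i j : 'I_c.+1) : (j - i <= d)%N -> Rsol i j = rband d i j.
Proof.
move=> le_d; rewrite mxE.
have le_c : (j - i <= c)%N by have := ltn_ord j; lia.
case: (leqP d c) => [le_dc|/ltnW le_cd]; first exact: rband_stable.
by rewrite (rband_stable le_c le_cd).
Qed.

Lemma Rsol_upper : upper_triangular Rsol.
Proof. by move=> i j lt_ji; rewrite mxE rband_lower. Qed.

Lemma Rsol_diag (i : 'I_c.+1) : Rsol i i = rdiag i.
Proof. by rewrite mxE rband_diag. Qed.

Lemma Rsol_ge0 : nonneg_mx Rsol.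
Proof. by move=> i j; rewrite mxE rband_ge0 // -ltnS. Qed.

Lemma Rsol_offdiag (i j : 'I_c.+1) : (i < j)%N ->
  Rsol i j = ((c - j + 1)%:R * alpha * Rsol i (inord j.-1)
              + j%:R * mu * \sum_(k < c.+1 | (i < k < j)%N) Rsol i k * Rsol k j)
             / (q j - j%:R * mu * (Rsol i i + Rsol j j)).
Proof.
move=> lt_ij; have lt_jc := ltn_ord j.
have [d dE] : exists d, (j - i = d.+1)%N by exists (j - i).-1; rewrite prednK ?subn_gt0.
have bandE (a b : 'I_c.+1) : (b - a <= d)%N -> rband d a b = Rsol a b.
  by move=> le_d; rewrite (Rsol_band le_d).
rewrite (Rsol_band (d := d.+1)) ?dE //= lt_ij dE eqxx /= !bandE ?subnn //.
have -> : rband d i j.-1 = Rsol i (inord j.-1) by rewrite -bandE inordK //; lia.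
congr ((_ + _ * _) / _); apply: eq_bigr => k /andP[lt_ik lt_kj].
by rewrite !bandE //; lia.
Qed.

Lemma Rsol_solves : solves_QBD lam mu alpha Rsol.
Proof.
have Rsol_up := Rsol_upper.
apply/matrixP => i j; rewrite -/(qbd_residual lam mu alpha Rsol) [RHS]mxE.
case: (ltngtP i j) => [lt_ij|lt_ji|/val_inj <-].
- rewrite qbd_residual_lt //.
  have denom_neq0 : q j - j%:R * mu * (Rsol i i + Rsol j j) != 0.
    by rewrite !Rsol_diag gt_eqF // offdiag_denom_gt0 // -ltnS.
  by rewrite (Rsol_offdiag lt_ij) divfK // subrr.
- exact: qbd_residual_gt.
- by rewrite qbd_residual_diag // Rsol_diag rdiag_root.
Qed.

End ExplicitSolution.

Section MinimalSolution.
Variables (R : rcfType) (c : nat) (lam mu alpha : R).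
Hypotheses (c_ge1 : (1 <= c)%N) (lam_gt0 : 0 < lam) (mu_gt0 : 0 < mu)
  (alpha_gt0 : 0 < alpha) (lam_lt : lam < c%:R * mu).
Variable X : 'M[R]_c.+1.
Hypothesis X_min : minimal_nonneg_solution lam mu alpha X.
Local Notation q := (qrate c lam mu alpha).

Let X_solves : qbd_residual lam mu alpha X = 0. Proof. by case: X_min. Qed.
Let X_ge0 : nonneg_mx X. Proof. by case: X_min. Qed.
Let X_le_Rsol (i j : 'I_c.+1) : X i j <= Rsol c lam mu alpha i j.
Proof. by case: X_min => _ _; apply; [apply: Rsol_solves | apply: Rsol_ge0]. Qed.

Lemma minimal_upper : upper_triangular X.
Proof.
move=> i j lt_ji; apply/le_anti; rewrite X_ge0 andbT.
by rewrite -(Rsol_upper lam mu alpha lt_ji) X_le_Rsol.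
Qed.

Lemma minimal_diag (j : 'I_c.+1) : X j j = rdiag c lam mu alpha j.
Proof.
apply/le_anti; rewrite -{1}(Rsol_diag lam mu alpha) X_le_Rsol /=.
have := qbd_residual_diag lam mu alpha minimal_upper j.
by rewrite X_solves mxE => /esym root_j; apply: rdiag_le_root.
Qed.

Lemma minimal_offdiag (i j : 'I_c.+1) : (i < j)%N ->
  X i j = ((c - j + 1)%:R * alpha * X i (inord j.-1)
           + j%:R * mu * \sum_(k < c.+1 | (i < k < j)%N) X i k * X k j)
          / (q j - j%:R * mu * (X i i + X j j)).
Proof.
move=> lt_ij; have := qbd_residual_lt lam mu alpha minimal_upper lt_ij.
rewrite X_solves mxE => /eqP; rewrite eq_sym subr_eq0 => /eqP ->.
by rewrite mulfK // !minimal_diag gt_eqF // offdiag_denom_gt0 // -ltnS.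
Qed.

End MinimalSolution.

Theorem mainTheorem4 (R : rcfType) (c : nat) (lam mu alpha : R)
    (Rm : 'M[R]_(c.+1)) :
  (1 <= c)%N -> 0 < lam -> 0 < mu -> 0 < alpha -> lam < c%:R * mu ->
  minimal_nonneg_solution lam mu alpha Rm ->
  [/\ (forall i j : 'I_c.+1, (j < i)%N -> Rm i j = 0),
      Rm ord0 ord0 = lam / (lam + c%:R * alpha),
      Rm ord_max ord_max = lam / (c%:R * mu),
      (forall i : 'I_c.+1, (1 <= i)%N -> (i <= c - 1)%N ->
         Rm i i =
           (lam + (i : nat)%:R * mu + (c - i)%:R * alpha
            - Num.sqrt ((lam + (i : nat)%:R * mu + (c - i)%:R * alpha) ^+ 2
                        - 4%:R * (i : nat)%:R * lam * mu))
           / (2%:R * (i : nat)%:R * mu)) &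
      (forall i j : 'I_c.+1, (i < j)%N ->
         Rm i j =
           ((c - j + 1)%:R * alpha * Rm i (inord (j.-1))
            + (j : nat)%:R * mu *
                \sum_(k : 'I_c.+1 | (i < k < j)%N) Rm i k * Rm k j)
           / (lam + (c - j)%:R * alpha + (j : nat)%:R * mu
              - (j : nat)%:R * mu * (Rm i i + Rm j j)))].
Proof.
move=> c_ge1 lam_gt0 mu_gt0 alpha_gt0 lam_lt Rm_min.
have diagE := minimal_diag c_ge1 lam_gt0 mu_gt0 alpha_gt0 lam_lt Rm_min.
split.
- exact: minimal_upper Rm_min.
- by rewrite diagE rdiag0.
- by rewrite diagE rdiag_c.
- move=> i i_ge1 _; rewrite diagE.
  case: (i : nat) i_ge1 => [//|n _]; rewrite /rdiag /small_root.
  by congr ((_ - Num.sqrt (_ - _)) / _); ring.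
- by move=> i j lt_ij; apply: minimal_offdiag.
Qed.
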